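(* Assume $\varepsilon\max_i\delta_i<1$. Suppose that either (i) $\mathcal G$ is structurally balanced (i.e. $\lambda_1(\mathcal L)=0$), or (ii) $\mathcal G$ is structurally unbalanced and $\lambda_1(\mathcal L)<2-\lambda_n(\mathcal L)$. Then $\pi_1<\pi_{1,d}$.
   Context: Let $\mathcal G$ be an undirected, connected signed graph on $n$ nodes without self-loops, with symmetric adjacency matrix $A=[a_{ij}]$ having zero diagonal and entries of either sign. Let $\delta_i=\sum_j|a_{ij}|>0$, $\Delta=\mathrm{diag}(\delta_i)$, and let $\mathcal L=I-\Delta^{-1}A$ be the normalized signed Laplacian, with real eigenvalues $\lambda_1(\mathcal L)\le\dots\le\lambda_n(\mathcal L)$. Structural balance means there is a signature matrix $S$ (diagonal with $\pm1$ entries) such that $SAS\ge0$ entrywise. Let $\varepsilon>0$ be a step size and, for $\pi>0$, let $L_\pi=\Delta-\pi A$ and $J_\pi=I-\varepsilon L_\pi$, both symmetric. Define $\pi_1=\frac{1}{1-\lambda_1(\mathcal L)}$; this is the value of $\pi$ at which $\lambda_1(L_\pi)=0$, equivalently $\lambda_n(J_\pi)=1$. Define $\pi_{1,d}$ as the smallest $\pi>0$ at which $\lambda_n(L_\pi)=2/\varepsilon$, equivalently $\lambda_1(J_\pi)=-1$. *)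

From HB Require Import structures.
From mathcomp Require Import all_boot all_order all_algebra.
From mathcomp Require Import reals.
Set Implicit Arguments. Unset Strict Implicit. Unset Printing Implicit Defensive.
Import Order.TTheory GRing.Theory Num.Theory.
Local Open Scope ring_scope.

Section SignedGraph.
Variables (R : realType) (n : nat).

Definition sdeg (A : 'M[R]_n) (i : 'I_n) : R := \sum_(j < n) `|A i j|.

Definition Deg (A : 'M[R]_n) : 'M[R]_n := diag_mx (\row_i sdeg A i).

Definition normLap (A : 'M[R]_n) : 'M[R]_n := 1%:M - invmx (Deg A) *m A.

Definition Lpi (A : 'M[R]_n) (p : R) : 'M[R]_n := Deg A - p *: A.

Definition is_min_eig (M : 'M[R]_n) (l : R) : Prop :=
  eigenvalue M l /\ forall mu, eigenvalue M mu -> l <= mu.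
Definition is_max_eig (M : 'M[R]_n) (l : R) : Prop :=
  eigenvalue M l /\ forall mu, eigenvalue M mu -> mu <= l.

Definition sg_connected (A : 'M[R]_n) : Prop :=
  forall i j : 'I_n, connect (fun u v : 'I_n => A u v != 0) i j.

Definition is_signature (S : 'M[R]_n) : Prop :=
  (forall i j : 'I_n, i != j -> S i j = 0) /\
  (forall i : 'I_n, S i i = 1 \/ S i i = -1).

Definition struct_balanced (A : 'M[R]_n) : Prop :=
  exists S : 'M[R]_n, is_signature S /\ forall i j, 0 <= (S *m A *m S) i j.

Definition pi1 (l1 : R) : R := 1 / (1 - l1).

Definition is_pi1d (A : 'M[R]_n) (eps p : R) : Prop :=
  (0 < p /\ is_max_eig (Lpi A p) (2 / eps)) /\
  forall q, 0 < q -> is_max_eig (Lpi A q) (2 / eps) -> p <= q.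

End SignedGraph.

From HB Require Import structures.
From mathcomp Require Import all_boot all_order all_algebra.
From mathcomp Require Import reals.
From mathcomp Require Import complex.
From mathcomp Require Import ring lra.
Import Order.TTheory GRing.Theory Num.Theory.
Set Implicit Arguments. Unset Strict Implicit. Unset Printing Implicit Defensive.
Local Open Scope ring_scope.

(* Let q = pi_{1,d} and let x be an eigenvector of L_q = Delta - q A for the
   eigenvalue c = 2/eps.  Since eps * delta_i < 1 we have c > 2 delta_i, so
   x^T Delta x - q x^T A x = c x^T x > 2 x^T Delta x.  A Rayleigh-quotient
   argument for the symmetric pencil (A, Delta) yields a generalized
   eigenvalue mu (t A = mu t Delta, t <> 0) with mu x^T Delta x <= x^T A x,
   and the displayed inequality then forces q mu < -1.  Every generalized
   eigenvalue mu makes 1 - mu an eigenvalue of the normalized Laplacian, so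
   1 - mu <= lambda_n; moreover mu >= -1 (Gershgorin).  Under either
   hypothesis (i) (balance gives the eigenvalue 0, hence lambda_1 <= 0) or
   (ii) this gives mu >= lambda_1 - 1, so q (1 - lambda_1) > 1, i.e.
   q > pi_1. *)

Section NormalSpectrum.
Variable C : numClosedFieldType.
Local Open Scope sesquilinear_scope.

(* Each entry of the spectral diagonal of a normal matrix is an eigenvalue,
   with the corresponding row of the unitary factor as eigenvector. *)
Lemma spectral_diag_eigenvalue n (M : 'M[C]_n) (i : 'I_n) :
  M \is normalmx -> eigenvalue M (spectral_diag M 0 i).
Proof.
move=> /orthomx_spectralP; set P := spectralmx M => ME.
have Punit : P \in unitmx := spectral_unit M.
apply/eigenvalueP; exists (row i P).
  rewrite -row_mul {1}ME !mulmxA mulmxV // mul1mx.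
  by apply/rowP => j; rewrite mul_diag_mx !mxE.
apply/eqP; rewrite rowE => P_i0.
have /matrixP/(_ 0 i) := etrans (esym (mulmxK Punit _)) (congr1 (mulmx^~ _) P_i0).
by rewrite mul0mx !mxE !eqxx => /eqP; rewrite oner_eq0.
Qed.

(* A lower bound a on the spectral values of a normal matrix M bounds its
   Hermitian form: a z z^* <= z M z^*, by diagonalizing in an orthonormal
   basis. *)
Lemma normal_form_ge n (M : 'M[C]_n) (a : C) (z : 'rV[C]_n) :
  M \is normalmx -> (forall j, a <= spectral_diag M 0 j) ->
  a * (z *m z^t*) 0 0 <= (z *m M *m z^t*) 0 0.
Proof.
move=> /orthomx_spectralP; set P := spectralmx M; set d := spectral_diag M.
move=> ME a_le.
have Pu : P \is unitarymx := spectral_unitarymx M.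
have Punit : P \in unitmx := spectral_unit M.
set y := z *m invmx P.
have yT : y^t* = P *m z^t*.
  rewrite /y invmx_unitary // trmx_mul map_mxM map_trmx trmxK.
  by rewrite -map_mx_comp (map_mx_id (@conjCK _)).
have -> : z *m M *m z^t* = y *m diag_mx d *m y^t* by rewrite yT {1}ME /y !mulmxA.
have -> : z *m z^t* = y *m y^t* by rewrite yT /y mulmxA -(mulmxA z) mulVmx // mulmx1.
rewrite mul_mx_diag !mxE mulr_sumr; apply: ler_sum => j _.
rewrite !mxE [X in _ <= X]mulrAC [X in X <= _]mulrC ler_wpM2l //.
exact: mul_conjC_ge0.
Qed.

End NormalSpectrum.

Section QuadraticForms.
Variable R : rcfType.
Local Open Scope sesquilinear_scope.
Local Notation f := (real_complex R).

Definition qf n (M : 'M[R]_n) (x : 'rV[R]_n) : R := (x *m M *m x^T) 0 0.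

Lemma qf_diag n (d : 'rV[R]_n) (x : 'rV[R]_n) :
  qf (diag_mx d) x = \sum_i d 0 i * (x 0 i * x 0 i).
Proof.
rewrite /qf mul_mx_diag mxE; apply: eq_bigr => i _; rewrite !mxE.
by rewrite mulrA [x 0 i * _]mulrC.
Qed.

Lemma qf_diag_gt0 n (d : 'rV[R]_n) (x : 'rV[R]_n) :
  (forall i, 0 < d 0 i) -> x != 0 -> 0 < qf (diag_mx d) x.
Proof.
move=> dpos /rV0Pn [i0 xi0]; rewrite qf_diag.
have term_ge0 i : true -> 0 <= d 0 i * (x 0 i * x 0 i).
  by move=> _; apply: mulr_ge0; [exact: ltW | rewrite -expr2 sqr_ge0].
rewrite lt_def sumr_ge0 // andbT; apply/eqP => sum0.
move: (psumr_eq0P term_ge0 sum0 (i := i0) erefl) => /eqP.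
by rewrite !mulf_eq0 gt_eqF //= orbb (negPf xi0).
Qed.

(* Rayleigh: a real symmetric matrix has an eigenvalue below any Rayleigh
   quotient.  Its complexification is Hermitian, so its spectral values are
   real and the smallest one does the job. *)
Lemma rayleigh n (M : 'M[R]_n) (x : 'rV[R]_n) : M^T = M -> x != 0 ->
  exists mu, eigenvalue M mu /\ mu * qf 1%:M x <= qf M x.
Proof.
rewrite /qf mulmx1 => Msym /rV0Pn[i0 _].
have conjf (a : R) : (f a)^* = f a by exact: conjc_real.
set MC := map_mx f M.
have herm : MC \is hermsymmx.
  apply/is_hermitianmxP; rewrite expr0 scale1r; apply/matrixP => i j.
  by rewrite !mxE conjf -[in RHS]Msym mxE.
have normal := hermitian_normalmx herm.
set d := spectral_diag MC.
have dE j : d 0 j = f (complex.Re (d 0 j)).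
  by rewrite RRe_real //; exact: (mxOverP (hermitian_spectral_diag_real herm)).
pose i := Order.arg_min i0 xpredT (fun j => complex.Re (d 0 j)).
have i_min j : complex.Re (d 0 i) <= complex.Re (d 0 j).
  by rewrite /i; case: arg_minP => // k _; apply.
exists (complex.Re (d 0 i)); split.
  have := spectral_diag_eigenvalue i normal; rewrite -/d dE.
  by rewrite !eigenvalue_root_char -map_char_poly fmorph_root.
have xCT : (map_mx f x)^t* = map_mx f x^T by apply/matrixP => a b; rewrite !mxE conjf.
have d_ge j : f (complex.Re (d 0 i)) <= d 0 j by rewrite (dE j) lecR i_min.
have := normal_form_ge (map_mx f x) normal d_ge.
by rewrite xCT -!map_mxM -lecR rmorphM /= !mxE.
Qed.

(* Proved by applying [rayleigh] to D^-1/2 M D^-1/2. *)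
Lemma pencil_rayleigh n (M : 'M[R]_n) (d x : 'rV[R]_n) :
  M^T = M -> (forall i, 0 < d 0 i) -> x != 0 ->
  exists mu (t : 'rV[R]_n),
    [/\ t != 0, t *m M = mu *: (t *m diag_mx d) & mu * qf (diag_mx d) x <= qf M x].
Proof.
move=> Msym dpos xn0.
have sq_gt0 i : 0 < Num.sqrt (d 0 i) by rewrite sqrtr_gt0.
pose Ds := diag_mx (\row_i Num.sqrt (d 0 i)).
pose Di := diag_mx (\row_i (Num.sqrt (d 0 i))^-1).
have DsDi : Ds *m Di = 1%:M.
  rewrite mulmx_diag -diag_const_mx; congr diag_mx; apply/rowP => j.
  by rewrite !mxE mulfV // gt_eqF.
have DiDs : Di *m Ds = 1%:M.
  rewrite mulmx_diag -diag_const_mx; congr diag_mx; apply/rowP => j.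
  by rewrite !mxE mulVf // gt_eqF.
have DsDs : Ds *m Ds = diag_mx d.
  rewrite mulmx_diag; congr diag_mx; apply/rowP => j.
  by rewrite !mxE -expr2 sqr_sqrtr // ltW.
have DiD : Di *m diag_mx d = Ds by rewrite -DsDs mulmxA DiDs mul1mx.
pose N := Di *m M *m Di.
have Nsym : N^T = N by rewrite /N !trmx_mul tr_diag_mx Msym mulmxA.
pose w := x *m Ds.
have wT : w^T = Ds *m x^T by rewrite /w trmx_mul tr_diag_mx.
have wn0 : w != 0.
  apply: contra xn0 => /eqP w0; apply/eqP.
  by rewrite -[x]mulmx1 -DsDi mulmxA -/w w0 mul0mx.
have [mu [/eigenvalueP[u uN un0] mu_le]] := rayleigh Nsym wn0.
exists mu, (u *m Di); split.
- apply: contra un0 => /eqP t0; apply/eqP.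
  by rewrite -[u]mulmx1 -DiDs mulmxA t0 mul0mx.
- have := congr1 (mulmx^~ Ds) uN.
  rewrite /N !mulmxA -(mulmxA _ Di) DiDs mulmx1 => ->.
  by rewrite -scalemxAl -mulmxA DiD.
- move: mu_le; rewrite /qf wT /w /N mulmx1 !mulmxA.
  rewrite -(mulmxA x Ds Ds) DsDs -(mulmxA x Ds Di) DsDi mulmx1.
  by rewrite -(mulmxA _ Di Ds) DiDs mulmx1.
Qed.

End QuadraticForms.

Section SignedGraph.
Variables (R : realType) (n : nat) (A : 'M[R]_n).
Hypothesis A_sym : A^T = A.
Hypothesis deg_gt0 : forall i, 0 < sdeg A i.

Lemma A_symE i j : A j i = A i j.
Proof. by rewrite -[in RHS]A_sym mxE. Qed.

Lemma Deg_diag_gt0 i : 0 < (\row_j sdeg A j) 0 i.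
Proof. by rewrite mxE. Qed.

Lemma Deg_unit : Deg A \in unitmx.
Proof.
rewrite unitmxE det_diag unitfE; apply/prodf_neq0 => i _.
by rewrite gt_eqF ?Deg_diag_gt0.
Qed.

Lemma pencil_eig_normLap (t : 'rV[R]_n) (mu : R) : t != 0 ->
  t *m A = mu *: (t *m Deg A) -> eigenvalue (normLap A) (1 - mu).
Proof.
move=> tn0 tA; apply/eigenvalueP; exists (t *m Deg A).
  rewrite /normLap mulmxBr mulmx1 mulmxA (mulmxK Deg_unit) tA.
  by rewrite scalerBl scale1r.
apply: contra tn0 => /eqP tD0; apply/eqP.
by rewrite -(mulmxK Deg_unit t) tD0 mul0mx.
Qed.

(* Gershgorin: every generalized eigenvalue of (A, Delta) has modulus at most
   one, since delta_j is the absolute column sum of A; we need mu >= -1. *)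
Lemma pencil_eig_ge_m1 (t : 'rV[R]_n) (mu : R) : t != 0 ->
  t *m A = mu *: (t *m Deg A) -> -1 <= mu.
Proof.
move=> /rV0Pn [i0 ti0] tA.
pose j := Order.arg_max i0 xpredT (fun k => `|t 0 k|).
have jmax k : `|t 0 k| <= `|t 0 j| by rewrite /j; case: arg_maxP => // l _; apply.
have tj_gt0 : 0 < `|t 0 j| by apply: lt_le_trans (jmax i0); rewrite normr_gt0.
have := congr1 (fun v : 'rV_n => v 0 j) tA; rewrite /= /Deg mul_mx_diag !mxE => tAj.
suff : `|mu| <= 1 by rewrite ler_norml => /andP[].
rewrite -(ler_pM2r (mulr_gt0 tj_gt0 (deg_gt0 j))) mul1r.
have -> : `|mu| * (`|t 0 j| * sdeg A j) = `|\sum_k t 0 k * A k j|.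
  by rewrite tAj !normrM (ger0_norm (ltW (deg_gt0 j))).
apply: le_trans (ler_norm_sum _ _ _) _; rewrite mulr_sumr; apply: ler_sum => k _.
by rewrite normrM A_symE ler_wpM2r.
Qed.

(* A structurally balanced graph has 0 in the spectrum of its normalized
   Laplacian: the signature vector is in the kernel. *)
Lemma balanced_normLap_eig0 (i0 : 'I_n) :
  struct_balanced A -> eigenvalue (normLap A) 0.
Proof.
move=> [S [[S_offdiag S_diag] SAS_ge0]].
have SE : S = diag_mx (\row_i S i i).
  apply/matrixP => i j; rewrite !mxE; case: (eqVneq i j) => [->|ij].
    by rewrite mulr1n.
  by rewrite S_offdiag // mulr0n.
have S_sq i : S i i * S i i = 1 by case: (S_diag i) => ->; rewrite ?mulr1 ?mulrNN ?mulr1.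
have S_norm i : `|S i i| = 1 by case: (S_diag i) => ->; rewrite ?normrN normr1.
rewrite -(subrr 1); apply: (@pencil_eig_normLap (\row_j S j j)).
  by apply/rV0Pn; exists i0; rewrite mxE -normr_gt0 S_norm ltr01.
rewrite scale1r /Deg mul_mx_diag; apply/rowP => j; rewrite !mxE.
have SAS_kj k : 0 <= S k k * A k j * S j j.
  by have := SAS_ge0 k j; rewrite SE mul_diag_mx mul_mx_diag !mxE !eqxx !mulr1n.
transitivity (S j j * \sum_k S k k * A k j * S j j).
  rewrite mulr_sumr; apply: eq_bigr => k _.
  by rewrite mxE -[LHS]mulr1 -(S_sq j); ring.
rewrite /sdeg; congr (_ * _); apply: eq_bigr => k _.
by rewrite (A_symE k j) -[LHS]ger0_norm // !normrM !S_norm mul1r mulr1.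
Qed.

Lemma pencil_eig_lower_bound (l1 ln mu : R) (t : 'rV[R]_n) :
  is_min_eig (normLap A) l1 -> is_max_eig (normLap A) ln ->
  struct_balanced A \/ (~ struct_balanced A /\ l1 < 2 - ln) ->
  t != 0 -> t *m A = mu *: (t *m Deg A) -> l1 - 1 <= mu.
Proof.
move=> [_ l1_min] [_ ln_max] hyp tn0 tA.
have := ln_max _ (pencil_eig_normLap tn0 tA).
case: hyp => [balanced | [_ spectral_gap]]; last by lra.
have [i0 _] := rV0Pn _ tn0.
have := l1_min _ (balanced_normLap_eig0 i0 balanced).
have := pencil_eig_ge_m1 tn0 tA.
lra.
Qed.

Lemma Lpi_large_eig_pencil (q c : R) (x : 'rV[R]_n) :
  0 < q -> (forall i, 2 * sdeg A i < c) -> x != 0 -> x *m Lpi A q = c *: x ->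
  exists mu (t : 'rV[R]_n), [/\ t != 0, t *m A = mu *: (t *m Deg A) & q * mu < -1].
Proof.
move=> q_gt0 c_gt xn0 xL.
have energy : qf (Deg A) x - q * qf A x = c * qf 1%:M x.
  have := congr1 (fun v : 'rV_n => (v *m x^T) 0 0) xL.
  by rewrite /= /Lpi mulmxBr mulmxBl -scalemxAr -!scalemxAl /qf mulmx1 !mxE.
have gap : 0 < c * qf 1%:M x - 2 * qf (Deg A) x.
  have -> : c * qf 1%:M x - 2 * qf (Deg A) x =
            qf (diag_mx (\row_i (c - 2 * sdeg A i))) x.
    rewrite -diag_const_mx /Deg !qf_diag !mulr_sumr -sumrB.
    by apply: eq_bigr => i _; rewrite !mxE; ring.
  by apply: qf_diag_gt0 => // i; rewrite mxE subr_gt0.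
have D_gt0 : 0 < qf (Deg A) x := qf_diag_gt0 Deg_diag_gt0 xn0.
have [mu [t [tn0 tA mu_le]]] := pencil_rayleigh A_sym Deg_diag_gt0 xn0.
exists mu, t; split => //.
move: energy gap D_gt0 mu_le q_gt0.
move: (qf A x) (qf (Deg A) x) (qf 1%:M x) => a d e; nra.
Qed.

End SignedGraph.

Theorem proposition2 (R : realType) (n : nat) (A : 'M[R]_n) (eps : R)
  (l1 ln p1d : R) :
  A^T = A ->
  (forall i : 'I_n, A i i = 0) ->
  (forall i : 'I_n, 0 < sdeg A i) ->
  sg_connected A ->
  0 < eps ->
  (forall i : 'I_n, eps * sdeg A i < 1) ->
  is_min_eig (normLap A) l1 ->
  is_max_eig (normLap A) ln ->
  (struct_balanced A \/ (~ struct_balanced A /\ l1 < 2 - ln)) ->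
  is_pi1d A eps p1d ->
  pi1 l1 < p1d.
Proof.
move=> A_sym _ deg_gt0 _ eps_gt0 eps_deg l1_min ln_max hyp [[q_gt0 [top_eig _]] _].
rewrite ltNge; apply/negP => q_le_pi1.
have l1_lt1 : l1 < 1.
  rewrite ltNge; apply/negP => l1_ge1.
  have : pi1 l1 <= 0 by rewrite /pi1 mul1r invr_le0 subr_le0.
  by move/(le_trans q_le_pi1); rewrite leNgt q_gt0.
have q_small : p1d * (1 - l1) <= 1 by rewrite -ler_pdivlMr ?subr_gt0.
have c_gt i : 2 * sdeg A i < 2 / eps.
  by rewrite ltr_pdivlMr //; have := eps_deg i; nra.
have [x xL xn0] := eigenvalueP top_eig.
have [mu [t [tn0 tA q_mu]]] := Lpi_large_eig_pencil A_sym deg_gt0 q_gt0 c_gt xn0 xL.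
have := pencil_eig_lower_bound A_sym deg_gt0 l1_min ln_max hyp tn0 tA.
nra.
Qed.
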